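(* Let $\alpha$ be a Heron angle with $0\le\alpha\le\pi$, and let $\lambda$ be a rational number with $0\le\lambda\le1$ such that $\sin\alpha=\lambda^2$. Then $\alpha\in\{0,\pi/2,\pi\}$.
   Context: An angle $\theta$ is called a Heron angle if both $\sin\theta$ and $\cos\theta$ are rational numbers. *)

From Stdlib Require Import Reals ZArith.
Open Scope R_scope.

Definition is_rational (x : R) : Prop :=
  exists (p q : Z), q <> 0%Z /\ x = IZR p / IZR q.

Definition heron_angle (theta : R) : Prop :=
  is_rational (sin theta) /\ is_rational (cos theta).

From Stdlib Require Import Reals ZArith Lia Lra.
From mathcomp Require all_boot zify.

(* If sin α = λ² and cos α = c with λ and c rational, then λ⁴ + c² = 1, and
   clearing denominators gives an integer solution of x⁴ = y⁴ + z².  By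
   Fermat's infinite descent this equation has no solution with y, z > 0:
   parametrising the primitive Pythagorean triples (y², z, x²), resp.
   (z, y², x²), turns a solution with gcd(x, y) = 1 into one with a smaller x.
   Hence sin α = 0 or cos α = 0, which on [0, π] leaves α ∈ {0, π/2, π}. *)

Module FermatQuartic.

Import all_boot zify.
Set Implicit Arguments.
Unset Strict Implicit.
Local Close Scope R_scope.
Local Open Scope nat_scope.

Lemma sqrn_sqr n : (n ^ 2) ^ 2 = n ^ 4.
Proof. by rewrite -expnM. Qed.

Lemma coprime_mul_sqr a b c : coprime a b -> a * b = c ^ 2 ->
  exists u v, a = u ^ 2 /\ b = v ^ 2.
Proof.
suff sqrl m n : coprime m n -> m * n = c ^ 2 -> exists u, m = u ^ 2.
  move=> cab abc; have [u au] := sqrl a b cab abc.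
  have [v bv] : exists v, b = v ^ 2 by apply: (sqrl b a); rewrite 1?coprime_sym // mulnC.
  by exists u, v.
move=> cmn mnc; exists (gcdn m c); apply/eqP; rewrite eqn_dvd; apply/andP; split.
  rewrite -mulnn muln_gcdl !muln_gcdr !dvdn_gcd [c * c]mulnn -mnc.
  by rewrite dvdn_mulr // dvdn_mulr // dvdn_mull // dvdn_mulr.
have cgn : coprime (gcdn m c ^ 2) n by rewrite coprimeXl // (coprime_dvdl (dvdn_gcdl m c)).
by rewrite -(Gauss_dvdl _ cgn) mnc dvdn_exp2r ?dvdn_gcdr.
Qed.

(* The first equation says a = r² - s² without truncated subtraction. *)
Lemma primitive_pythagorean a b c : coprime a b -> a ^ 2 + b ^ 2 = c ^ 2 -> ~~ odd b ->
  exists r s, [/\ coprime r s, a + s ^ 2 = r ^ 2, b = 2 * r * s & c = r ^ 2 + s ^ 2].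
Proof.
move=> cab abc eb.
have oa : odd a by rewrite -coprime2n coprime_sym (coprime_dvdr _ cab) // dvdn2.
have [n cn] : exists n, c = a + 2 * n by exists ((c - a) %/ 2); nia.
have [k bk] : exists k, b = 2 * k by exists (b %/ 2); lia.
have nk : n * (a + n) = k ^ 2 by nia.
have cop : coprime n (a + n).
  rewrite /coprime gcdnDr -/(coprime n a) coprime_sym (coprime_dvdr _ (coprimeXr 2 cab)) //.
  by apply/dvdnP; exists (4 * (a + n)); nia.
have [s [r [ns nr]]] := coprime_mul_sqr cop nk.
exists r, s; split.
- by rewrite -(coprime_pexpl _ _ (_ : 0 < 2)) // -(coprime_pexpr _ _ (_ : 0 < 2)) // -nr -ns coprime_sym.
- by rewrite -ns.
- by rewrite bk -mulnA; congr (2 * _); apply/eqP; rewrite -eqn_sqr expnMn -nr -ns mulnC nk.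
- lia.
Qed.

Definition quartic_sol x y z := [/\ 0 < y, 0 < z & x ^ 4 = y ^ 4 + z ^ 2].

Definition smaller_quartic_sol x := exists x' y' z', x' < x /\ quartic_sol x' y' z'.

(* With p = 2u² and q = v², the triple (v², 2u², x) is primitive; its
   parameters r = A², s = B² satisfy A⁴ = B⁴ + v² and A <= r² < x. *)
Lemma smaller_quartic_sol_even_leg x y p q : coprime p q -> ~~ odd p -> 0 < y ->
  x ^ 2 = p ^ 2 + q ^ 2 -> y ^ 2 = 2 * p * q -> smaller_quartic_sol x.
Proof.
move=> cpq ep y_gt0 xpq ypq.
have [t pt] : exists t, p = 2 * t by exists (p %/ 2); lia.
have [w yw] : exists w, y = 2 * w by exists (y %/ 2); nia.
have [u [v [tu qv]]] : exists u v, t = u ^ 2 /\ q = v ^ 2.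
  apply: (coprime_mul_sqr (c := w)); last by nia.
  by apply: coprime_dvdl cpq; rewrite pt dvdn_mull.
have cvu : coprime (v ^ 2) (2 * u ^ 2) by rewrite -qv -tu -pt coprime_sym.
have [r [s [crs vsr urs xrs]]] : exists r s, [/\ coprime r s, v ^ 2 + s ^ 2 = r ^ 2,
    2 * u ^ 2 = 2 * r * s & x = r ^ 2 + s ^ 2].
  by apply: (primitive_pythagorean cvu); rewrite ?oddM // xpq pt tu qv addnC.
have {}urs : r * s = u ^ 2 by lia.
have [A [B [rA sB]]] := coprime_mul_sqr crs urs.
have : 0 < 2 * p * q by rewrite -ypq expn_gt0 y_gt0.
rewrite !muln_gt0 => /andP[/andP[_ p_gt0] q_gt0].
have B_gt0 : 0 < B.
  by move: p_gt0; rewrite pt tu -urs sB !muln_gt0 => /and4P[].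
exists A, B, v; split; last split.
- have A_le : A <= A ^ 4 by case: A {rA} => // A; rewrite -{1}(expn1 A.+1); exact: leq_pexp2l.
  have : 0 < B ^ 4 by rewrite expn_gt0 B_gt0.
  rewrite xrs rA sB !sqrn_sqr; lia.
- exact: B_gt0.
- by move: q_gt0; rewrite qv expn_gt0 orbF.
- by rewrite -!sqrn_sqr -rA -sB -vsr addnC.
Qed.

Lemma smaller_quartic_sol_coprime x y z : coprime x y -> quartic_sol x y z ->
  smaller_quartic_sol x.
Proof.
move=> cxy [y_gt0 z_gt0 E].
have cyz : coprime (y ^ 2) z.
  rewrite -(coprime_pexpr _ _ (_ : 0 < 2)) // /coprime -(gcdnMDl (y ^ 2)) -expnD -E.
  by apply/coprimeXl/coprimeXr; rewrite coprime_sym.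
have [oy | ey] := boolP (odd y).
  have ox : odd x.
    (* otherwise x⁴ = 0 but y⁴ + z² = 2 modulo 4 *)
    apply/negPn/negP => ex.
    have [i xi] : exists i, x = 2 * i by exists (x %/ 2); lia.
    have [j yj] : exists j, y = 2 * j + 1 by exists (y %/ 2); lia.
    have [k zk] : exists k, z = 2 * k + 1 by exists (z %/ 2); lia.
    by move: E; rewrite xi yj zk; nia.
  have ez : ~~ odd z by lia.
  have E' : (y ^ 2) ^ 2 + z ^ 2 = (x ^ 2) ^ 2 by rewrite !sqrn_sqr.
  have [r [s [_ yrs zrs xrs]]] := primitive_pythagorean cyz E' ez.
  have s_gt0 : 0 < s by move: z_gt0; rewrite zrs muln_gt0 => /andP[].
  exists r, s, (x * y); split; last split.
  - by rewrite -ltn_sqr xrs -addn1 leq_add2l expn_gt0 s_gt0.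
  - exact: s_gt0.
  - by rewrite muln_gt0 y_gt0 andbT; case: (x) ox.
  - (* r⁴ - s⁴ = (r² - s²)(r² + s²) = y²x² *)
    by rewrite -!sqrn_sqr expnMn xrs -yrs; nia.
have ox : odd x by rewrite -coprime2n coprime_sym (coprime_dvdr _ cxy) // dvdn2.
have E' : z ^ 2 + (y ^ 2) ^ 2 = (x ^ 2) ^ 2 by rewrite addnC !sqrn_sqr.
have ey2 : ~~ odd (y ^ 2) by rewrite oddX.
have czy : coprime z (y ^ 2) by rewrite coprime_sym.
have [r [s [crs _ yrs xrs]]] := primitive_pythagorean czy E' ey2.
have : ~~ odd (r * s).
  have [w yw] : exists w, y = 2 * w by exists (y %/ 2); lia.
  have -> : r * s = 2 * w ^ 2 by nia.
  by rewrite oddM.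
rewrite oddM negb_and => /orP[er | es].
  exact: smaller_quartic_sol_even_leg crs er y_gt0 xrs yrs.
apply: (@smaller_quartic_sol_even_leg x y s r) => //.
- by rewrite coprime_sym.
- by rewrite addnC.
- by rewrite mulnAC.
Qed.

Lemma smaller_quartic_sol_descent x y z : quartic_sol x y z -> smaller_quartic_sol x.
Proof.
move=> sol; have [y_gt0 z_gt0 E] := sol.
have x_gt0 : 0 < x.
  have : 0 < x ^ 4 by rewrite E ltn_addr // expn_gt0 y_gt0.
  by rewrite expn_gt0 orbF.
set g := gcdn x y; have g_gt0 : 0 < g by rewrite gcdn_gt0 x_gt0.
have [g_le1 | g_gt1] := leqP g 1.
  by apply: (smaller_quartic_sol_coprime _ sol); rewrite /coprime eqn_leq g_le1 g_gt0.
have gx : g %| x := dvdn_gcdl x y.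
have gy : g %| y := dvdn_gcdr x y.
have g2z : g ^ 2 %| z.
  by rewrite -(dvdn_pexp2r _ _ (_ : 0 < 2)) // sqrn_sqr -(dvdn_addr _ (dvdn_exp2r 4 gy)) -E dvdn_exp2r.
exists (x %/ g), (y %/ g), (z %/ g ^ 2); split; first exact: ltn_Pdiv g_gt1 x_gt0.
have g2_gt0 : 0 < g ^ 2 by rewrite expn_gt0 g_gt0.
split; first by rewrite divn_gt0 // dvdn_leq.
  by rewrite divn_gt0 // dvdn_leq.
apply/eqP; rewrite -(eqn_pmul2r (_ : 0 < g ^ 4)) ?expn_gt0 ?g_gt0 //.
by rewrite mulnDl -!expnMn !divnK // -(sqrn_sqr g) -expnMn divnK // E.
Qed.

Lemma quartic_sol_none x y z : ~ quartic_sol x y z.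
Proof.
elim/ltn_ind: x y z => x IH y z /smaller_quartic_sol_descent [x' [y' [z' [lt_x' sol']]]].
exact: IH lt_x' y' z' sol'.
Qed.

Lemma fermat_quartic_nat x y z : x ^ 4 = y ^ 4 + z ^ 2 -> y = 0 \/ z = 0.
Proof.
move=> E; have [-> | y_gt0] := posnP y; first by left.
have [-> | z_gt0] := posnP z; first by right.
by case: (@quartic_sol_none x y z).
Qed.

Lemma fermat_quartic (x y z : Z) : (x ^ 4 = y ^ 4 + z ^ 2)%Z -> y = 0%Z \/ z = 0%Z.
Proof.
have even4 : Z.Even 4 by exists 2%Z.
have even2 : Z.Even 2 by exists 1%Z.
rewrite (Z.pow_even_abs x) // (Z.pow_even_abs y) // (Z.pow_even_abs z) // => E.
suff : Z.abs_nat y = 0 \/ Z.abs_nat z = 0 by lia.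
apply: (@fermat_quartic_nat (Z.abs_nat x)); lia.
Qed.

End FermatQuartic.

Lemma rational_quartic_conic (l c : R) : is_rational l -> is_rational c ->
  l ^ 4 + c ^ 2 = 1 -> l = 0 \/ c = 0.
Proof.
intros [p [q [Hq ->]]] [r [s [Hs ->]]] E.
assert (Hq' := not_0_IZR _ Hq). assert (Hs' := not_0_IZR _ Hs).
assert (HZ : ((q * s) ^ 4 = (p * s) ^ 4 + (r * q ^ 2 * s) ^ 2)%Z).
{ apply eq_IZR.
  rewrite plus_IZR, <- !(pow_IZR _ 4), <- !(pow_IZR _ 2), !mult_IZR, <- (pow_IZR _ 2).
  rewrite <- (Rmult_1_r ((IZR q * IZR s) ^ 4)), <- E.
  field. auto. }
destruct (FermatQuartic.fermat_quartic HZ) as [Hps | Hrqs]; [left | right].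
- assert (p = 0%Z) as -> by nia; unfold Rdiv; ring.
- assert (r = 0%Z) as -> by nia; unfold Rdiv; ring.
Qed.

Theorem lemma1 (alpha lambda : R)
  (Hheron : heron_angle alpha)
  (Halpha : 0 <= alpha <= PI)
  (Hlrat : is_rational lambda)
  (Hl : 0 <= lambda <= 1)
  (Hsin : sin alpha = lambda ^ 2) :
  alpha = 0 \/ alpha = PI / 2 \/ alpha = PI.
Proof.
destruct Hheron as [_ Hcos].
assert (Hcirc : lambda ^ 4 + cos alpha ^ 2 = 1).
{ rewrite <- (sin2_cos2 alpha), Hsin. unfold Rsqr. ring. }
pose proof PI_RGT_0.
destruct (rational_quartic_conic _ _ Hlrat Hcos Hcirc) as [Hl0 | Hc0].
- assert (Hs0 : sin alpha = 0) by (rewrite Hsin, Hl0; ring).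
  destruct (sin_eq_O_2PI_0 alpha) as [| [|]]; lra.
- destruct (cos_eq_0_2PI_0 alpha); lra.
Qed.
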